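(* Assume the setting below and sharp missingness: $M_i(1)=M_i(0)$ for all $1\le i\le n$. Fix $\boldsymbol\delta\in\mathbb R^n$ and $b\in\mathbb R$, and let $\boldsymbol w\in\mathbb R^n$ have coordinates $w_i=Y_i-\delta_iZ_i$ if $M_i=1$ and $w_i=b$ if $M_i=0$. Then $\tilde p^{\texttt c}_{\boldsymbol Z,\boldsymbol\delta,b}:=G_{\mathrm R,\phi}(t_{\mathrm R,\phi}(\boldsymbol Z,\boldsymbol w))$ is a valid p-value for $H_{\boldsymbol\delta}:\boldsymbol\tau=\boldsymbol\delta$: if $H_{\boldsymbol\delta}$ holds, $\mathbb P(\tilde p^{\texttt c}_{\boldsymbol Z,\boldsymbol\delta,b}\le\alpha)\le\alpha$ for all $\alpha\in(0,1)$.
   Context: There are $n$ units with fixed potential outcomes $Y_i^\star(0),Y_i^\star(1)\in\mathbb R$ and fixed potential missingness indicators $M_i(0),M_i(1)\in\{0,1\}$; $\tau_i=Y_i^\star(1)-Y_i^\star(0)$, $\boldsymbol\tau=(\tau_1,\dots,\tau_n)^\intercal$. $\boldsymbol Z\in\{0,1\}^n$ is from a completely randomized experiment (CRE): uniform over vectors with exactly $n_1$ ones ($n_1,n_0\ge1$ fixed, $n_1+n_0=n$), independent of all potential quantities; probabilities are over $\boldsymbol Z$. $M_i=Z_iM_i(1)+(1-Z_i)M_i(0)$; the realized outcome $Z_iY_i^\star(1)+(1-Z_i)Y_i^\star(0)$ is observed, denoted $Y_i$, iff $M_i=1$. $\psi_{i,j}(y,y')=\mathbf 1\{y>y'\}+\mathbf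 1\{y=y'\}\mathbf 1\{i\ge j\}$; $\mathrm{rank}_i(\boldsymbol y)=\sum_j\psi_{i,j}(y_i,y_j)$; $\phi$ nondecreasing real function on the nonnegative integers; $t_{\mathrm R,\phi}(\boldsymbol z,\boldsymbol y)$ is either $\sum_i z_i\phi(\mathrm{rank}_i(\boldsymbol y))$ or $\sum_i z_i\phi(\sum_j(1-z_j)\psi_{i,j}(y_i,y_j))$ (result holds for either); $G_{\mathrm R,\phi}(c)=\mathbb P(t_{\mathrm R,\phi}(\boldsymbol A,\boldsymbol y_0)\ge c)$ with $\boldsymbol A$ from the CRE and $\boldsymbol y_0\in\mathbb R^n$ any fixed vector (independent of $\boldsymbol y_0$). *)

From mathcomp Require Import all_boot all_order all_algebra.
Set Implicit Arguments. Unset Strict Implicit. Unset Printing Implicit Defensive.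
Import Order.TTheory GRing.Theory Num.Theory.
Local Open Scope ring_scope.

Notation assign n := {ffun 'I_n -> bool}.

Definition cre (n n1 : nat) : {set assign n} :=
  [set z : assign n | #|[set i | z i]| == n1].

Definition cre_prob (R : realFieldType) (n n1 : nat) (E : pred (assign n)) : R :=
  #|[set z in cre n n1 | E z]|%:R / #|cre n n1|%:R.

Definition psi (R : realFieldType) (n : nat) (i j : 'I_n) (y y' : R) : nat :=
  ((y' < y) || ((y == y') && (j <= i)%N) : bool).

Definition rank (R : realFieldType) (n : nat) (y : 'I_n -> R) (i : 'I_n) : nat :=
  (\sum_(j < n) psi i j (y i) (y j))%N.

Definition t_stat (R : realFieldType) (n : nat) (variant : bool) (phi : nat -> R)
    (z : assign n) (y : 'I_n -> R) : R :=
  if variant then \sum_(i < n) (z i)%:R * phi (rank y i)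
  else \sum_(i < n) (z i)%:R *
         phi (\sum_(j < n) (1 - z j) * psi i j (y i) (y j))%N.

Definition G_stat (R : realFieldType) (n n1 : nat) (variant : bool) (phi : nat -> R)
    (y0 : 'I_n -> R) (c : R) : R :=
  cre_prob R n1 (fun A => c <= t_stat variant phi A y0).

Definition obsM (n : nat) (M1 M0 : 'I_n -> bool) (z : assign n) (i : 'I_n) : bool :=
  if z i then M1 i else M0 i.

Definition realY (R : realFieldType) (n : nat) (Y1 Y0 : 'I_n -> R) (z : assign n)
    (i : 'I_n) : R :=
  if z i then Y1 i else Y0 i.

Definition wvec (R : realFieldType) (n : nat) (Y1 Y0 : 'I_n -> R) (M1 M0 : 'I_n -> bool)
    (delta : 'I_n -> R) (b : R) (z : assign n) (i : 'I_n) : R :=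
  if obsM M1 M0 z i then realY Y1 Y0 z i - delta i * (z i)%:R else b.

Definition pval (R : realFieldType) (n n1 : nat) (variant : bool) (phi : nat -> R)
    (y0 : 'I_n -> R) (Y1 Y0 : 'I_n -> R) (M1 M0 : 'I_n -> bool)
    (delta : 'I_n -> R) (b : R) (z : assign n) : R :=
  G_stat n1 variant phi y0 (t_stat variant phi z (wvec Y1 Y0 M1 M0 delta b z)).

(* Under the null hypothesis and sharp missingness the imputed vector [w] does
   not depend on the assignment: [w_i] is [Y_i(0)] for units with observed
   outcomes and [b] otherwise.  A rank statistic sees its outcome vector only
   through the ranking permutation, and the completely randomized design is
   invariant under relabelling the units, so the law of [t(A, y)] does not
   depend on [y].  The p-value is therefore the survival function of
   [t(., w)] evaluated at its own realized value, and such a p-value is valid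
   for any statistic under a uniform law: among the assignments with p-value
   at most [alpha], one minimizing the statistic has a survival set containing
   all of them. *)

From mathcomp Require Import all_boot all_order all_algebra fingroup perm.
Set Implicit Arguments. Unset Strict Implicit. Unset Printing Implicit Defensive.
Import Order.TTheory GRing.Theory Num.Theory.
Local Open Scope ring_scope.

Section UniformProbability.
Variables (R : realFieldType) (T : finType) (C : {set T}).

Definition unif_prob (E : pred T) : R := #|[set z in C | E z]|%:R / #|C|%:R.

Lemma eq_unif_prob (E E' : pred T) : E =1 E' -> unif_prob E = unif_prob E'.
Proof.
by move=> eE; rewrite /unif_prob; congr (_%:R / _); apply: eq_card => z; rewrite !inE eE.
Qed.

Lemma unif_prob_comp (f : T -> T) (E : pred T) :
  injective f -> (forall z, (f z \in C) = (z \in C)) ->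
  unif_prob (E \o f) = unif_prob E.
Proof.
move=> f_inj fC; rewrite /unif_prob; congr (_%:R / _).
have -> : [set z in C | (E \o f) z] = f @^-1: [set z in C | E z].
  by apply/setP => z; rewrite !inE fC.
exact: card_preimset.
Qed.

Lemma unif_prob_survival_le (f : T -> R) (a : R) : 0 <= a ->
  unif_prob (fun z => unif_prob (fun x => f z <= f x) <= a) <= a.
Proof.
move=> a_ge0; rewrite {1}/unif_prob; set S := [set z in C | _].
have [-> | [z0 z0S]] := set_0Vmem S; first by rewrite cards0 mul0r.
have [zm zmS zm_min] := arg_minP f z0S.
have : zm \in S := zmS; rewrite inE => /andP[_]; apply: le_trans.
apply: ler_wpM2r; first by rewrite invr_ge0.
rewrite ler_nat; apply/subset_leq_card/subsetP => z zS.
by move: (zS) (zm_min z zS); rewrite !inE => /andP[-> _] ->.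
Qed.

End UniformProbability.

Lemma cre_probE (R : realFieldType) n n1 (E : pred (assign n)) :
  cre_prob R n1 E = unif_prob R (cre n n1) E.
Proof. by []. Qed.

Section RankPermutation.
Variables (d : Order.disp_t) (K : orderType d) (n : nat) (key : 'I_n -> K).
Hypothesis key_inj : injective key.

Definition key_rank (i : 'I_n) : nat := #|[set j | (key j < key i)%O]|.

Lemma key_rank_lt i : (key_rank i < n)%N.
Proof.
rewrite -[n]card_ord -cardsT; apply/proper_card/properP; split; first exact: subsetT.
by exists i; rewrite ?inE ?ltxx.
Qed.

Lemma leq_key_rank i j : (key j <= key i)%O = (key_rank j <= key_rank i)%N.
Proof.
case: leP => [le_ji | lt_ij].
  by apply/esym/subset_leq_card/subsetP => k; rewrite !inE => /lt_le_trans->.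
apply/esym/negbTE; rewrite -ltnNge; apply/proper_card/properP; split.
  by apply/subsetP => k; rewrite !inE => /lt_trans->.
by exists i; rewrite !inE ?ltxx.
Qed.

Lemma key_rank_inj : injective (fun i => Ordinal (key_rank_lt i)).
Proof.
by move=> i j [e]; apply/key_inj/le_anti; rewrite !leq_key_rank e leqnn.
Qed.

Definition key_perm : {perm 'I_n} := perm key_rank_inj.

Lemma le_key_perm i j : (key j <= key i)%O = (key_perm j <= key_perm i)%N.
Proof. by rewrite !permE leq_key_rank. Qed.

End RankPermutation.

Section RankStatistic.
Variables (R : realFieldType) (n : nat).

Definition outcome_key (y : 'I_n -> R) (i : 'I_n) : R *l nat := (y i, val i).

Lemma outcome_key_inj y : injective (outcome_key y).
Proof. by move=> i j [_ /val_inj]. Qed.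

Lemma psi_outcome_key y i j :
  psi i j (y i) (y j) = (outcome_key y j <= outcome_key y i)%O.
Proof. by rewrite /psi lexi_pair; case: ltgtP. Qed.

Definition ranking (y : 'I_n -> R) : {perm 'I_n} :=
  key_perm (@outcome_key_inj y).

Lemma psi_ranking y i j : psi i j (y i) (y j) = (ranking y j <= ranking y i)%N.
Proof. by rewrite psi_outcome_key (le_key_perm (@outcome_key_inj y)). Qed.

Lemma psi_relabel (y y' : 'I_n -> R) : exists s : {perm 'I_n},
  forall i j, psi i j (y i) (y j) = psi (s i) (s j) (y' (s i)) (y' (s j)).
Proof.
exists (ranking y * (ranking y')^-1)%g => i j.
by rewrite !psi_ranking !permM !permKV.
Qed.

Definition relabel (s : {perm 'I_n}) (z : assign n) : assign n :=
  [ffun k => z ((s^-1)%g k)].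

Lemma relabel_perm s z i : relabel s z (s i) = z i.
Proof. by rewrite ffunE permK. Qed.

Lemma relabel_inj s : injective (relabel s).
Proof.
by move=> z z' e; apply/ffunP => i; rewrite -(relabel_perm s z) e relabel_perm.
Qed.

Lemma relabel_cre n1 s z : (relabel s z \in cre n n1) = (z \in cre n n1).
Proof.
rewrite !inE; congr (_ == _).
have -> : [set k | relabel s z k] = (s^-1)%g @^-1: [set i | z i].
  by apply/setP => k; rewrite !inE ffunE.
exact/card_preimset/perm_inj.
Qed.

Lemma eq_t_stat v (phi : nat -> R) z (y y' : 'I_n -> R) :
  y =1 y' -> t_stat v phi z y = t_stat v phi z y'.
Proof.
move=> e; rewrite /t_stat /rank; case: v; apply: eq_bigr => i _;
  by congr (_ * phi _); apply: eq_bigr => j _; rewrite !e.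
Qed.

Lemma t_stat_relabel v (phi : nat -> R) (y y' : 'I_n -> R) (s : {perm 'I_n}) z :
  (forall i j, psi i j (y i) (y j) = psi (s i) (s j) (y' (s i)) (y' (s j))) ->
  t_stat v phi z y = t_stat v phi (relabel s z) y'.
Proof.
move=> psi_s; rewrite /t_stat /rank.
case: v; rewrite [RHS](reindex_inj (@perm_inj _ s)); apply: eq_bigr => i _ /=;
  rewrite relabel_perm; congr (_ * phi _);
  rewrite [RHS](reindex_inj (@perm_inj _ s)); apply: eq_bigr => j _ /=;
  by rewrite ?relabel_perm psi_s.
Qed.

Lemma G_stat_indep n1 v (phi : nat -> R) (y y' : 'I_n -> R) c :
  G_stat n1 v phi y c = G_stat n1 v phi y' c.
Proof.
have [s psi_s] := psi_relabel y y'.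
rewrite /G_stat !cre_probE -[RHS](unif_prob_comp _ _ (@relabel_inj s) (relabel_cre n1 s)).
by apply: eq_unif_prob => A /=; rewrite (t_stat_relabel _ _ _ psi_s).
Qed.

End RankStatistic.

Lemma wvec_sharp_null (R : realFieldType) n (Y1 Y0 : 'I_n -> R) (M1 M0 : 'I_n -> bool)
    (delta : 'I_n -> R) (b : R) z :
  (forall i, M1 i = M0 i) -> (forall i, Y1 i - Y0 i = delta i) ->
  wvec Y1 Y0 M1 M0 delta b z =1 (fun i => if M0 i then Y0 i else b).
Proof.
move=> sharp null i; rewrite /wvec /obsM /realY sharp -null.
by case: (M0 i) (z i) => -[] //=; rewrite ?mulr1 ?mulr0 ?subr0 // opprB addrC subrK.
Qed.

Theorem proposition1 (R : realFieldType) (n n1 : nat)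
    (hn1 : (1 <= n1)%N) (hn0 : (1 <= n - n1)%N)
    (Y1 Y0 : 'I_n -> R) (M1 M0 : 'I_n -> bool)
    (phi : nat -> R) (hphi : {homo phi : a b / (a <= b)%N >-> a <= b})
    (variant : bool) (y0 : 'I_n -> R)
    (delta : 'I_n -> R) (b : R)
    (hsharp : forall i, M1 i = M0 i)
    (hnull : forall i, Y1 i - Y0 i = delta i) :
  forall alpha : R, 0 < alpha < 1 ->
    cre_prob R n1 (fun z => pval n1 variant phi y0 Y1 Y0 M1 M0 delta b z <= alpha)
      <= alpha.
Proof.
move=> alpha /andP[alpha_gt0 _].
pose w i := if M0 i then Y0 i else b.
have pvalE z : pval n1 variant phi y0 Y1 Y0 M1 M0 delta b z =
    unif_prob R (cre n n1) (fun A => t_stat variant phi z w <= t_stat variant phi A w).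
  rewrite /pval (eq_t_stat _ _ _ (wvec_sharp_null b z hsharp hnull)).
  by rewrite (G_stat_indep _ _ _ y0 w) /G_stat cre_probE.
rewrite cre_probE; under eq_unif_prob => z do rewrite pvalE.
exact: unif_prob_survival_le (ltW alpha_gt0).
Qed.
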